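(* Let $p\in(0,1]$. Let $Q=(q_{j,k})_{j,k\geq 0}$ be the generator on $\mathbb N_0$ with $q_{j,j+1}=jp$, $q_{j,k}=\binom{j}{k}p^k(1-p)^{j-k}$ for $0\leq k\leq j-1$, $q_{j,j}=-(jp+1-p^j)$, and $q_{j,k}=0$ otherwise. Let $\bar Q=(\bar q_{j,k})_{j,k\geq1}$ be the generator on $\mathbb N=\{1,2,\dots\}$ with $\bar q_{j,k}=\binom{j-1}{k-1}p^k(1-p)^{j-k}$ for $1\leq k\leq j-1$, $\bar q_{j,j+1}=(j+1)p$, $\bar q_{j,j}=p^j-(2+j)p$, and $\bar q_{j,k}=0$ otherwise. If $\bar Q$ defines a positive recurrent Markov chain, then there exists a quasi-stationary distribution $a$ for $Q$ with eigenvalue $-(1-2p)$, i.e. $a=(a_k)_{k\geq1}$ with $a_k\geq0$, $\sum_k a_k=1$ and $\sum_{j\geq1}a_jq_{j,k}=-(1-2p)a_k$ for all $k\geq1$.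
   Context: $\bar Q$ is the $(1-2p)$-dual of $Q$ with respect to the vector $x_k=k$, i.e. $\bar q_{j,k}=(q_{j,k}+(1-2p)\delta_{jk})k/j$ for $j,k\geq1$. *)

From Stdlib Require Import Reals Arith.
From Coquelicot Require Import Coquelicot.
Open Scope R_scope.

(** A generator (Q-matrix) on a state space of naturals, as a function
    nat -> nat -> R.  The state space is {k | m <= k} for a lower bound m. *)

Definition Qgen (p : R) (j k : nat) : R :=
  if Nat.eqb k (S j) then INR j * p
  else if Nat.ltb k j then Binomial.C j k * p ^ k * (1 - p) ^ (j - k)
  else if Nat.eqb k j then - (INR j * p + 1 - p ^ j)
  else 0.

(** The generator Qbar on N = {1,2,...} of the paper
    (values outside j,k >= 1 are irrelevant and set to 0). *)
Definition Qbar (p : R) (j k : nat) : R :=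
  if (Nat.eqb j 0 || Nat.eqb k 0)%bool then 0
  else if Nat.ltb k j then Binomial.C (j - 1) (k - 1) * p ^ k * (1 - p) ^ (j - k)
  else if Nat.eqb k (S j) then INR (S j) * p
  else if Nat.eqb k j then p ^ j - (2 + INR j) * p
  else 0.

Definition jrate (G : nat -> nat -> R) (j : nat) : R := - G j j.

Definition jprob (G : nat -> nat -> R) (j k : nat) : R :=
  if Req_EM_T (jrate G j) 0 then (if Nat.eqb j k then 1 else 0)
  else if Nat.eqb j k then 0 else G j k / jrate G j.

(** [hitp m G i n j] = P_j(X_1,...,X_n <> i, X_(n+1) = i) for the jump chain
    (X_l) of G on the state space {k | m <= k}. *)
Fixpoint hitp (m : nat) (G : nat -> nat -> R) (i : nat) (n : nat) (j : nat) : R :=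
  match n with
  | O => jprob G j i
  | S n' => Series (fun k => if (Nat.leb m k && negb (Nat.eqb k i))%bool
                             then jprob G j k * hitp m G i n' k else 0)
  end.

(** [hitt m G i n j] = E_j[(sum_{l <= n} 1/q(X_l)) ; X_1..X_n <> i, X_(n+1) = i],
    i.e. the expected time of the continuous-time chain (sum of exponential
    holding times with means 1/q) on the event that the first return/hit of i
    by the jump chain happens at jump n+1. *)
Fixpoint hitt (m : nat) (G : nat -> nat -> R) (i : nat) (n : nat) (j : nat) : R :=
  match n with
  | O => jprob G j i / jrate G j
  | S n' => Series (fun k => if (Nat.leb m k && negb (Nat.eqb k i))%bool
                             then jprob G j k * (hitp m G i n' k / jrate G j + hitt m G i n' k)
                             else 0)
  end.

(** State i is positive recurrent: starting from i, the chain returns to i with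
    probability 1, and the expected return time
    m_i = E_i[T_i], T_i = inf{t >= J_1 : X_t = i}, is finite. *)
Definition pos_recurrent_state (m : nat) (G : nat -> nat -> R) (i : nat) : Prop :=
  is_series (fun n => hitp m G i n i) 1 /\ ex_series (fun n => hitt m G i n i).

Definition pos_recurrent (m : nat) (G : nat -> nat -> R) : Prop :=
  forall i, (m <= i)%nat -> pos_recurrent_state m G i.

Definition is_qsd (Q : nat -> nat -> R) (a : nat -> R) (lam : R) : Prop :=
  (forall k, (1 <= k)%nat -> 0 <= a k) /\
  is_series (fun n => a (S n)) 1 /\
  (forall k, (1 <= k)%nat -> is_series (fun n => a (S n) * Q (S n) k) (lam * a k)).

(* If the dual chain Qbar is positive recurrent, the cycle construction at state 1 gives an
   invariant measure of its jump chain: nu_k, the expected number of visits to k during an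
   excursion from 1.  Dividing by the jump rates gives mu_k = nu_k / qbar_k with mu Qbar = 0,
   and sum_k mu_k is at most the mean return time to 1, hence finite.  Since Qbar is the
   (1-2p)-dual of Q with respect to x_k = k, the normalisation of mu_k / k is a
   quasi-stationary distribution of Q with eigenvalue -(1-2p).  The cycle construction only
   uses that the jump chain on {1, 2, ...} is stochastic, skip-free upwards, and has rates
   bounded away from 0. *)

From Stdlib Require Import Reals Lra Lia.
From Coquelicot Require Import Coquelicot.
Open Scope R_scope.

Fixpoint psum (f : nat -> R) (n : nat) : R :=
  match n with O => 0 | S n => psum f n + f n end.

Lemma psum_sum_n f N : sum_n f N = psum f (S N).
Proof.
  induction N; simpl.
  - rewrite sum_O. lra.
  - rewrite sum_Sn, IHN. reflexivity.
Qed.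

Lemma psum_ext f g N : (forall k, (k < N)%nat -> f k = g k) -> psum f N = psum g N.
Proof.
  induction N; simpl; intros H; auto.
  rewrite IHN by (intros; apply H; lia). rewrite H by lia. reflexivity.
Qed.

Lemma psum_plus f g N : psum (fun k => f k + g k) N = psum f N + psum g N.
Proof. induction N; simpl; lra. Qed.

Lemma psum_minus f g N : psum (fun k => f k - g k) N = psum f N - psum g N.
Proof. induction N; simpl; lra. Qed.

Lemma psum_scal_l a f N : psum (fun k => a * f k) N = a * psum f N.
Proof. induction N; simpl; [lra|]. rewrite IHN; ring. Qed.

Lemma psum_scal_r a f N : psum (fun k => f k * a) N = psum f N * a.
Proof. induction N; simpl; [lra|]. rewrite IHN; ring. Qed.

Lemma psum_zero N : psum (fun _ => 0) N = 0.
Proof. induction N; simpl; lra. Qed.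

Lemma psum_const a N : psum (fun _ => a) N = INR N * a.
Proof. induction N; [simpl; ring|]. rewrite S_INR. simpl psum. rewrite IHN. ring. Qed.

Lemma psum_trunc f N B :
  (forall k, (N <= k)%nat -> f k = 0) -> (N <= B)%nat -> psum f B = psum f N.
Proof. intros H HB. induction HB; auto. simpl. rewrite IHHB, H by lia. lra. Qed.

Lemma psum_le f g N : (forall k, (k < N)%nat -> f k <= g k) -> psum f N <= psum g N.
Proof.
  induction N; simpl; intros H; [lra|].
  pose proof (H N ltac:(lia)). pose proof (IHN ltac:(intros; apply H; lia)). lra.
Qed.

Lemma psum_nonneg f N : (forall k, (k < N)%nat -> 0 <= f k) -> 0 <= psum f N.
Proof. intros H. rewrite <- (psum_zero N). apply psum_le. auto. Qed.

Lemma psum_incr f N M : (forall k, 0 <= f k) -> (N <= M)%nat -> psum f N <= psum f M.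
Proof. intros H HM. induction HM; simpl; [lra|]. specialize (H m). lra. Qed.

Lemma psum_term_le f k B : (forall j, 0 <= f j) -> (k < B)%nat -> f k <= psum f B.
Proof.
  intros H Hk. apply Rle_trans with (psum f (S k)).
  - simpl. pose proof (psum_nonneg f k ltac:(auto)). lra.
  - apply psum_incr; auto.
Qed.

Lemma psum_shift f N : psum f (S N) = f O + psum (fun k => f (S k)) N.
Proof. induction N; simpl in *; lra. Qed.

Lemma psum_split f N M : psum f (N + M) = psum f N + psum (fun k => f (N + k)%nat) M.
Proof.
  induction M; simpl.
  - rewrite Nat.add_0_r. lra.
  - rewrite Nat.add_succ_r. simpl. rewrite IHM. lra.
Qed.

Lemma psum_exchange (f : nat -> nat -> R) N M :
  psum (fun i => psum (fun j => f i j) M) N = psum (fun j => psum (fun i => f i j) N) M.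
Proof.
  induction N; simpl.
  - rewrite psum_zero. reflexivity.
  - rewrite IHN, <- psum_plus. reflexivity.
Qed.

Lemma psum_delta f k B :
  (k < B)%nat -> psum (fun j => (if Nat.eqb j k then 1 else 0) * f j) B = f k.
Proof.
  intros Hk. rewrite (psum_trunc _ (S k)); [|intros j Hj|lia].
  2:{ destruct (Nat.eqb_spec j k); [lia|ring]. }
  simpl. rewrite Nat.eqb_refl, (psum_ext _ (fun _ => 0)), psum_zero; [ring|].
  intros j Hj. destruct (Nat.eqb_spec j k); [lia|ring].
Qed.

Lemma is_series_psum (f : nat -> R) (s : R) : is_series f s <-> is_lim_seq (psum f) s.
Proof.
  rewrite (is_lim_seq_incr_1 (psum f)). split; intros H.
  - eapply is_lim_seq_ext; [|exact H]. intros N. apply psum_sum_n.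
  - eapply is_lim_seq_ext in H; [exact H|]. intros N. symmetry. apply psum_sum_n.
Qed.

Lemma is_lim_seq_le_R u v (l1 l2 : R) :
  (forall n, u n <= v n) -> is_lim_seq u l1 -> is_lim_seq v l2 -> l1 <= l2.
Proof. intros H H1 H2. exact (is_lim_seq_le u v l1 l2 H H1 H2). Qed.

Lemma psum_le_series f s N : (forall n, 0 <= f n) -> is_series f s -> psum f N <= s.
Proof.
  intros H Hs. apply is_series_psum in Hs. apply (is_lim_seq_incr_compare _ _ Hs).
  intros n. simpl. specialize (H n). lra.
Qed.

Lemma is_series_nonneg_bounded f M : (forall n, 0 <= f n) -> (forall N, psum f N <= M) ->
  exists s, is_series f s /\ s <= M.
Proof.
  intros H HM.
  assert (Hincr : forall n, psum f n <= psum f (S n)) by (intros n; simpl; specialize (H n); lra).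
  destruct (ex_finite_lim_seq_incr _ M Hincr HM) as [s Hs].
  exists s. split.
  - apply is_series_psum. exact Hs.
  - apply (is_lim_seq_le_R _ (fun _ => M) s M HM Hs (is_lim_seq_const M)).
Qed.

Lemma is_lim_seq_psum (u : nat -> nat -> R) (l : nat -> R) J :
  (forall j, is_lim_seq (fun L => u L j) (l j)) -> is_lim_seq (fun L => psum (u L) J) (psum l J).
Proof.
  intros H. induction J; simpl.
  - apply is_lim_seq_const.
  - apply is_lim_seq_plus'; auto.
Qed.

Lemma is_series_psum_comm (u : nat -> nat -> R) (F : nat -> R) J :
  (forall j, is_series (fun l => u l j) (F j)) -> is_series (fun l => psum (u l) J) (psum F J).
Proof.
  intros H. apply is_series_psum.
  apply (is_lim_seq_ext (fun L => psum (fun j => psum (fun l => u l j) L) J)).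
  - intros L. apply psum_exchange.
  - apply is_lim_seq_psum. intros j. apply is_series_psum, H.
Qed.

Lemma is_series_finite f N : (forall k, (N <= k)%nat -> f k = 0) -> is_series f (psum f N).
Proof.
  intros H. apply is_series_psum, (is_lim_seq_incr_n _ N).
  apply (is_lim_seq_ext (fun _ => psum f N)); [|apply is_lim_seq_const].
  intros n. symmetry. apply psum_trunc; auto; lia.
Qed.

Lemma Series_finite f N : (forall k, (N <= k)%nat -> f k = 0) -> Series f = psum f N.
Proof. intros H. apply is_series_unique, is_series_finite, H. Qed.

Lemma is_series_shift (f : nat -> R) (s : R) :
  f 0%nat = 0 -> is_series f s -> is_series (fun n => f (S n)) s.
Proof.
  intros H0 Hs. apply is_series_incr_1. rewrite H0.
  change (is_series f (s + 0)). rewrite Rplus_0_r. exact Hs.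
Qed.

Lemma is_series_monotone_limit (f : nat -> nat -> R) (F s : nat -> R) (S0 : R) :
  (forall L j, 0 <= f L j) -> (forall L j, f L j <= f (S L) j) ->
  (forall j, is_lim_seq (fun L => f L j) (F j)) ->
  (forall L, is_series (f L) (s L)) -> is_lim_seq s S0 -> is_series F S0.
Proof.
  intros Hpos Hincr HF Hs HS.
  assert (HfF : forall L j, f L j <= F j).
  { intros L j. exact (is_lim_seq_incr_compare (fun L => f L j) _ (HF j) (fun L => Hincr L j) L). }
  assert (HF0 : forall j, 0 <= F j) by (intros j; specialize (HfF O j); specialize (Hpos O j); lra).
  assert (Hbound : forall J, psum F J <= S0).
  { intros J. apply (is_lim_seq_le_R (fun L => psum (f L) J) s); auto.
    - intros L. apply psum_le_series; auto.
    - apply is_lim_seq_psum; auto. }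
  destruct (is_series_nonneg_bounded F S0 HF0 Hbound) as [t [Ht Hle]].
  enough (S0 <= t) by (replace S0 with t by lra; exact Ht).
  apply (is_lim_seq_le_R s (fun _ => t)); auto using is_lim_seq_const.
  intros L. apply (is_lim_seq_le_R (psum (f L)) (psum F)).
  - intros N. apply psum_le. auto.
  - apply is_series_psum; auto.
  - apply is_series_psum; auto.
Qed.

Lemma is_series_swap_nonneg (u : nat -> nat -> R) (F g : nat -> R) (S0 : R) :
  (forall l j, 0 <= u l j) ->
  (forall j, is_series (fun l => u l j) (F j)) -> (forall l, is_series (u l) (g l)) ->
  is_series g S0 -> is_series F S0.
Proof.
  intros Hpos HF Hg HS.
  apply (is_series_monotone_limit (fun L j => psum (fun l => u l j) L) F (psum g) S0).
  - intros L j. apply psum_nonneg. auto.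
  - intros L j. simpl. specialize (Hpos L j). lra.
  - intros j. apply is_series_psum, HF.
  - intros L. apply (is_series_psum_comm (fun j l => u l j)). auto.
  - apply is_series_psum, HS.
Qed.

Lemma is_series_minus_R (f g : nat -> R) (a b : R) :
  is_series f a -> is_series g b -> is_series (fun n => f n - g n) (a - b).
Proof. intros Hf Hg. exact (is_series_minus f g a b Hf Hg). Qed.

Lemma is_series_delta_S (g : nat -> R) k :
  (1 <= k)%nat -> is_series (fun n => if Nat.eqb (S n) k then g k else 0) (g k).
Proof.
  intros Hk.
  assert (Hfin := is_series_finite (fun n => if Nat.eqb (S n) k then g k else 0) k).
  rewrite (psum_ext _ (fun n => (if Nat.eqb n (k - 1) then 1 else 0) * g k)), psum_delta in Hfin.
  - apply Hfin. intros n Hn. destruct (Nat.eqb_spec (S n) k); [lia|reflexivity].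
  - lia.
  - intros n _. destruct (Nat.eqb_spec (S n) k), (Nat.eqb_spec n (k - 1)); try lia; ring.
Qed.

Lemma jprob_pos_rate G j k : 0 < jrate G j ->
  jprob G j k = if Nat.eqb j k then 0 else G j k / jrate G j.
Proof.
  intros Hq. unfold jprob. destruct (Req_EM_T (jrate G j) 0); [lra|reflexivity].
Qed.

Section TabooChain.

Variable G : nat -> nat -> R.
Variable r : R.
Hypothesis r_pos : 0 < r.
Hypothesis jrate_nonneg : forall j, 0 <= jrate G j.
Hypothesis jrate_ge : forall j, (1 <= j)%nat -> r <= jrate G j.
Hypothesis jprob_nonneg : forall j k, 0 <= jprob G j k.
Hypothesis jprob_skipfree : forall j k, (j + 2 <= k)%nat -> jprob G j k = 0.
Hypothesis jprob_to0 : forall j, (1 <= j)%nat -> jprob G j 0 = 0.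
Hypothesis jprob_rowsum : forall j, (1 <= j)%nat -> psum (jprob G j) (j + 2) = 1.

Lemma inv_jrate_nonneg j : 0 <= / jrate G j.
Proof.
  destruct (Req_dec (jrate G j) 0) as [->|Hq].
  - rewrite Rinv_0. lra.
  - specialize (jrate_nonneg j). left. apply Rinv_0_lt_compat. lra.
Qed.

Lemma inv_jrate_le j : (1 <= j)%nat -> / jrate G j <= / r.
Proof. intros Hj. apply Rinv_le_contravar; auto. Qed.

(* The jump chain killed on entering 1 or 0 (which lies outside the state space), as in
   [hitp 1 G 1]. *)
Definition taboo_jprob j k :=
  if (Nat.leb 1 k && negb (Nat.eqb k 1))%bool then jprob G j k else 0.

Lemma taboo_jprob_nonneg j k : 0 <= taboo_jprob j k.
Proof. unfold taboo_jprob. destruct (_ && _)%bool; auto; lra. Qed.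

Lemma taboo_jprob_skipfree j k : (j + 2 <= k)%nat -> taboo_jprob j k = 0.
Proof.
  intros H. unfold taboo_jprob. rewrite jprob_skipfree by exact H. destruct (_ && _)%bool; auto.
Qed.

Lemma taboo_jprob_at01 j k : (k <= 1)%nat -> taboo_jprob j k = 0.
Proof.
  intros Hk. unfold taboo_jprob.
  destruct k as [|[|k]]; [reflexivity|reflexivity|lia].
Qed.

Lemma psum_taboo_jprob j B : (1 <= j)%nat -> (j + 2 <= B)%nat ->
  psum (taboo_jprob j) B = 1 - jprob G j 1.
Proof.
  intros Hj HB. rewrite (psum_trunc _ (j + 2)) by (auto using taboo_jprob_skipfree).
  rewrite <- (jprob_rowsum j Hj), (Nat.add_comm j 2), !psum_split.
  rewrite (psum_ext (fun k => taboo_jprob j (2 + k)) (fun k => jprob G j (2 + k))) by reflexivity.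
  simpl. rewrite jprob_to0 by exact Hj. unfold taboo_jprob. simpl. lra.
Qed.

(* [taboo m k] is P_1(X_m = k, X_1, ..., X_m <> 1) for the jump chain (X_l). *)
Fixpoint taboo (m k : nat) : R :=
  match m with
  | O => if Nat.eqb k 1 then 1 else 0
  | S m' => psum (fun j => taboo m' j * taboo_jprob j k) (m' + 2)
  end.

Definition return_prob (m : nat) : R := psum (fun j => taboo m j * jprob G j 1) (m + 2).

Lemma taboo_nonneg m k : 0 <= taboo m k.
Proof.
  revert k; induction m; intros k; simpl.
  - destruct (Nat.eqb k 1); lra.
  - apply psum_nonneg. intros j _. apply Rmult_le_pos; auto using taboo_jprob_nonneg.
Qed.

Lemma taboo_support m k : (m + 2 <= k)%nat -> taboo m k = 0.
Proof.
  destruct m; intros H; simpl.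
  - destruct (Nat.eqb_spec k 1); [lia|reflexivity].
  - rewrite (psum_ext _ (fun _ => 0)), psum_zero; [reflexivity|].
    intros j Hj. rewrite taboo_jprob_skipfree by lia. ring.
Qed.

Lemma taboo_at0 m : taboo m 0 = 0.
Proof.
  destruct m; simpl; [reflexivity|].
  rewrite (psum_ext _ (fun _ => 0)), psum_zero; [reflexivity|].
  intros j _. rewrite taboo_jprob_at01 by lia. ring.
Qed.

Lemma taboo_S_at1 m : taboo (S m) 1 = 0.
Proof.
  simpl. rewrite (psum_ext _ (fun _ => 0)), psum_zero; [reflexivity|].
  intros j _. rewrite taboo_jprob_at01 by lia. ring.
Qed.

Lemma taboo_S_jprob m k : (2 <= k)%nat ->
  taboo (S m) k = psum (fun j => taboo m j * jprob G j k) (m + 2).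
Proof.
  intros Hk. simpl. apply psum_ext. intros j _. unfold taboo_jprob.
  destruct (Nat.leb_spec 1 k), (Nat.eqb_spec k 1); try lia. reflexivity.
Qed.

Lemma hitp_S n j B : (j + 2 <= B)%nat ->
  hitp 1 G 1 (S n) j = psum (fun k => taboo_jprob j k * hitp 1 G 1 n k) B.
Proof.
  intros HB. simpl. rewrite (Series_finite _ B).
  - apply psum_ext. intros k _. unfold taboo_jprob. destruct (_ && _)%bool; ring.
  - intros k Hk. rewrite jprob_skipfree by lia. destruct (_ && _)%bool; ring.
Qed.

Lemma hitt_S n j B : (j + 2 <= B)%nat ->
  hitt 1 G 1 (S n) j =
  psum (fun k => taboo_jprob j k * (hitp 1 G 1 n k / jrate G j + hitt 1 G 1 n k)) B.
Proof.
  intros HB. simpl. rewrite (Series_finite _ B).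
  - apply psum_ext. intros k _. unfold taboo_jprob. destruct (_ && _)%bool; ring.
  - intros k Hk. rewrite jprob_skipfree by lia. destruct (_ && _)%bool; ring.
Qed.

Lemma taboo_step x m B : (m + 3 <= B)%nat ->
  psum (fun j => taboo m j * psum (fun k => taboo_jprob j k * x k) B) B =
  psum (fun k => taboo (S m) k * x k) B.
Proof.
  intros HB.
  rewrite (psum_ext _ (fun j => psum (fun k => taboo m j * taboo_jprob j k * x k) B)).
  2:{ intros j _. rewrite <- psum_scal_l. apply psum_ext. intros; ring. }
  rewrite psum_exchange. apply psum_ext. intros k _.
  rewrite psum_scal_r. f_equal. simpl. apply psum_trunc; [|lia].
  intros j Hj. rewrite taboo_support by lia. ring.
Qed.

Lemma taboo_hitp n : forall m B, (m + n + 2 <= B)%nat ->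
  psum (fun j => taboo m j * hitp 1 G 1 n j) B = return_prob (m + n).
Proof.
  induction n; intros m B HB.
  - rewrite Nat.add_0_r. unfold return_prob. apply psum_trunc; [|lia].
    intros j Hj. rewrite taboo_support by lia. ring.
  - rewrite (psum_ext _ (fun j => taboo m j * psum (fun k => taboo_jprob j k * hitp 1 G 1 n k) B)).
    + rewrite taboo_step, IHn by lia. f_equal. lia.
    + intros j Hj. destruct (Compare_dec.le_lt_dec (j + 2) B).
      * rewrite (hitp_S n j B) by exact l. reflexivity.
      * rewrite taboo_support by lia. ring.
Qed.

Lemma hitp_at1 n : hitp 1 G 1 n 1 = return_prob n.
Proof.
  rewrite <- (Nat.add_0_l n) at 2. rewrite <- (taboo_hitp n 0 (n + 2)) by lia. simpl.
  rewrite (psum_delta (fun j => hitp 1 G 1 n j) 1) by lia. reflexivity.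
Qed.

Lemma taboo_mass m : psum (taboo m) (m + 2) + psum return_prob m = 1.
Proof.
  induction m; [simpl; lra|].
  enough (E : psum (taboo (S m)) (S m + 2) = psum (taboo m) (m + 2) - return_prob m)
    by (rewrite E; simpl; lra).
  transitivity
    (psum (fun j => taboo m j * psum (fun k => taboo_jprob j k * 1) (S m + 2)) (S m + 2)).
  - rewrite taboo_step by lia. apply psum_ext. intros; ring.
  - rewrite (psum_ext _ (fun j => taboo m j - taboo m j * jprob G j 1)).
    + rewrite psum_minus, !(psum_trunc _ (m + 2) (S m + 2))
        by (lia || (intros; cbv beta; rewrite taboo_support by lia; ring)).
      reflexivity.
    + intros j Hj. destruct j as [|j]; [rewrite taboo_at0; ring|].
      destruct (Compare_dec.le_lt_dec (S j + 2) (S m + 2)).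
      * rewrite (psum_ext _ (taboo_jprob (S j))) by (intros; ring).
        rewrite psum_taboo_jprob by lia. ring.
      * rewrite taboo_support by lia. ring.
Qed.

Lemma hitp_nonneg n j : 0 <= hitp 1 G 1 n j.
Proof.
  revert j; induction n; intros j; [apply jprob_nonneg|].
  rewrite (hitp_S n j (j + 2)) by lia. apply psum_nonneg. intros.
  apply Rmult_le_pos; auto using taboo_jprob_nonneg.
Qed.

Lemma hitt_nonneg n j : 0 <= hitt 1 G 1 n j.
Proof.
  revert j; induction n; intros j.
  - apply Rmult_le_pos; auto using inv_jrate_nonneg.
  - rewrite (hitt_S n j (j + 2)) by lia. apply psum_nonneg. intros k _.
    apply Rmult_le_pos; [apply taboo_jprob_nonneg|].
    apply Rplus_le_le_0_compat; auto.
    apply Rmult_le_pos; auto using hitp_nonneg, inv_jrate_nonneg.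
Qed.

(* [hit_within M j] = P_j(the jump chain visits 1 during its first M jumps), and [time_within M j]
   is the expected time of that visit restricted to this event. *)
Definition hit_within M j := psum (fun n => hitp 1 G 1 n j) M.
Definition time_within N j := psum (fun n => hitt 1 G 1 n j) N.

Lemma hit_within_nonneg M j : 0 <= hit_within M j.
Proof. apply psum_nonneg. intros; apply hitp_nonneg. Qed.

Lemma hit_within_S M j B : (j + 2 <= B)%nat ->
  hit_within (S M) j = jprob G j 1 + psum (fun k => taboo_jprob j k * hit_within M k) B.
Proof.
  intros HB. unfold hit_within. rewrite psum_shift. f_equal.
  rewrite (psum_ext _ (fun n => psum (fun k => taboo_jprob j k * hitp 1 G 1 n k) B))
    by (intros; apply hitp_S; exact HB).
  rewrite psum_exchange. apply psum_ext. intros. apply psum_scal_l.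
Qed.

Lemma hit_within_le1 M j : (1 <= j)%nat -> hit_within M j <= 1.
Proof.
  revert j; induction M; intros j Hj; [unfold hit_within; simpl; lra|].
  rewrite (hit_within_S M j (j + 2)) by lia.
  pose proof (psum_taboo_jprob j (j + 2) Hj ltac:(lia)).
  enough (psum (fun k => taboo_jprob j k * hit_within M k) (j + 2)
          <= psum (taboo_jprob j) (j + 2)) by lra.
  apply psum_le. intros k _. destruct (Compare_dec.le_lt_dec k 1).
  - rewrite taboo_jprob_at01 by exact l. lra.
  - pose proof (IHM k ltac:(lia)). pose proof (taboo_jprob_nonneg j k). nra.
Qed.

Lemma time_within_S N j B : (j + 2 <= B)%nat ->
  time_within (S N) j =
  hit_within (S N) j / jrate G j + psum (fun k => taboo_jprob j k * time_within N k) B.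
Proof.
  intros HB. unfold time_within, hit_within. rewrite !psum_shift.
  rewrite (psum_ext (fun n => hitt 1 G 1 (S n) j)
    (fun n => psum (fun k => taboo_jprob j k * hitp 1 G 1 n k) B / jrate G j
              + psum (fun k => taboo_jprob j k * hitt 1 G 1 n k) B)).
  2:{ intros. rewrite (hitt_S _ _ B HB). unfold Rdiv.
      rewrite <- psum_scal_r, <- psum_plus. apply psum_ext. intros; ring. }
  rewrite (psum_ext (fun n => hitp 1 G 1 (S n) j)
    (fun n => psum (fun k => taboo_jprob j k * hitp 1 G 1 n k) B))
    by (intros; apply hitp_S; exact HB).
  rewrite psum_plus. unfold Rdiv. rewrite psum_scal_r, !(psum_exchange _ N B).
  rewrite (psum_ext (fun k => psum (fun i => taboo_jprob j k * hitp 1 G 1 i k) N)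
                    (fun k => taboo_jprob j k * psum (fun i => hitp 1 G 1 i k) N))
    by (intros; apply psum_scal_l).
  rewrite (psum_ext (fun k => psum (fun i => taboo_jprob j k * hitt 1 G 1 i k) N)
                    (fun k => taboo_jprob j k * psum (fun i => hitt 1 G 1 i k) N))
    by (intros; apply psum_scal_l).
  change (hitt 1 G 1 0 j) with (hitp 1 G 1 0 j / jrate G j). unfold Rdiv. ring.
Qed.

Lemma taboo_time_within N : forall m B, (m + N + 2 <= B)%nat ->
  psum (fun j => taboo m j * time_within N j) B =
  psum (fun l => psum (fun j => taboo (m + l) j * hit_within (N - l) j / jrate G j) B) N.
Proof.
  induction N; intros m B HB.
  - unfold time_within. simpl.
    rewrite (psum_ext _ (fun _ => 0)), psum_zero by (intros; ring). reflexivity.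
  - rewrite (psum_ext (fun j => taboo m j * time_within (S N) j)
      (fun j => taboo m j * hit_within (S N) j / jrate G j
                + taboo m j * psum (fun k => taboo_jprob j k * time_within N k) B)).
    2:{ intros j Hj. destruct (Compare_dec.le_lt_dec (j + 2) B).
        - rewrite (time_within_S N j B) by exact l. unfold Rdiv; ring.
        - rewrite taboo_support by lia. unfold Rdiv; ring. }
    rewrite psum_plus, taboo_step, IHN by lia.
    rewrite psum_shift, Nat.add_0_r, Nat.sub_0_r. f_equal.
    apply psum_ext. intros l _. apply psum_ext. intros j _.
    replace (m + S l)%nat with (S m + l)%nat by lia. reflexivity.
Qed.

Lemma taboo_miss l N : (l <= N)%nat ->
  psum (fun j => taboo l j * (1 - hit_within (N - l) j)) (N + 2) = 1 - psum return_prob N.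
Proof.
  intros HlN.
  rewrite (psum_ext _ (fun j => taboo l j - psum (fun n => taboo l j * hitp 1 G 1 n j) (N - l)))
    by (intros; unfold hit_within; rewrite psum_scal_l; ring).
  rewrite psum_minus, psum_exchange.
  rewrite (psum_ext (fun n => psum (fun j => taboo l j * hitp 1 G 1 n j) (N + 2))
                    (fun n => return_prob (l + n))) by (intros; apply taboo_hitp; lia).
  rewrite (psum_trunc (taboo l) (l + 2)) by (lia || (intros; apply taboo_support; lia)).
  assert (psum return_prob N = psum return_prob l + psum (fun n => return_prob (l + n)) (N - l))
    by (rewrite <- psum_split; f_equal; lia).
  pose proof (taboo_mass l). lra.
Qed.

(* Expected holding time in the state reached after l jumps, on the event that 1 is not yet revisited. *)
Definition taboo_time l := psum (fun j => taboo l j / jrate G j) (l + 2).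

Lemma taboo_div_nonneg l j : 0 <= taboo l j / jrate G j.
Proof. apply Rmult_le_pos; auto using taboo_nonneg, inv_jrate_nonneg. Qed.

Lemma psum_taboo_div_le l J : psum (fun j => taboo l j / jrate G j) J <= taboo_time l.
Proof.
  unfold taboo_time. destruct (Compare_dec.le_lt_dec J (l + 2)).
  - apply psum_incr; auto using taboo_div_nonneg.
  - rewrite (psum_trunc _ (l + 2) J); [lra| |lia].
    intros. rewrite taboo_support by lia. unfold Rdiv. ring.
Qed.

Lemma taboo_time_defect l N : (l <= N)%nat ->
  taboo_time l <= psum (fun j => taboo l j * hit_within (N - l) j / jrate G j) (N + 2)
                  + / r * (1 - psum return_prob N).
Proof.
  intros HlN. rewrite <- (taboo_miss l N HlN), <- psum_scal_l, <- psum_plus.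
  unfold taboo_time. rewrite (psum_trunc _ (l + 2) (N + 2))
    by (lia || (intros; rewrite taboo_support by lia; unfold Rdiv; ring)).
  apply psum_le. intros j _.
  destruct j as [|j]; [rewrite taboo_at0; unfold Rdiv; lra|].
  pose proof (inv_jrate_le (S j) ltac:(lia)).
  pose proof (hit_within_le1 (N - l) (S j) ltac:(lia)). pose proof (taboo_nonneg l (S j)).
  assert (0 <= taboo l (S j) * (1 - hit_within (N - l) (S j)) * (/ r - / jrate G (S j)))
    by (apply Rmult_le_pos; [apply Rmult_le_pos|]; lra).
  unfold Rdiv. nra.
Qed.

Section Recurrent.

Hypothesis return_series : is_series return_prob 1.
Hypothesis return_time_ex : ex_series (fun n => hitt 1 G 1 n 1).

Local Notation return_time := (Series (fun n => hitt 1 G 1 n 1)).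

(* Excursions that return within N jumps spend at most the mean return time in total; the others
   have probability 1 - P(return within N jumps), which vanishes by recurrence. *)
Lemma psum_taboo_time_le L : psum taboo_time L <= return_time.
Proof.
  assert (Hbound : forall N, (L <= N)%nat ->
            psum taboo_time L <= return_time + INR L / r * (1 - psum return_prob N)).
  { intros N HLN.
    set (X l := psum (fun j => taboo l j * hit_within (N - l) j / jrate G j) (N + 2)).
    assert (HX : time_within N 1 = psum X N).
    { pose proof (taboo_time_within N 0 (N + 2) ltac:(lia)) as E. simpl in E.
      rewrite (psum_delta (fun j => time_within N j)) in E by lia. exact E. }
    assert (Htime : time_within N 1 <= return_time)
      by (apply psum_le_series; auto using hitt_nonneg, Series_correct).
    assert (HXL : psum X L <= psum X N).
    { apply psum_incr; [|exact HLN]. intros l. apply psum_nonneg. intros j _.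
      apply Rmult_le_pos; [apply Rmult_le_pos|];
        auto using taboo_nonneg, hit_within_nonneg, inv_jrate_nonneg. }
    assert (Hdef : psum taboo_time L <= psum (fun l => X l + / r * (1 - psum return_prob N)) L)
      by (apply psum_le; intros; apply taboo_time_defect; lia).
    rewrite psum_plus, psum_const in Hdef. unfold Rdiv. lra. }
  assert (Hlim : is_lim_seq (fun N => return_time + INR L / r * (1 - psum return_prob N))
                            (return_time + INR L / r * (1 - 1))).
  { apply is_lim_seq_plus'; [apply is_lim_seq_const|].
    apply is_lim_seq_mult'; [apply is_lim_seq_const|].
    apply is_lim_seq_minus'; [apply is_lim_seq_const|].
    apply is_series_psum, return_series. }
  replace (return_time + INR L / r * (1 - 1)) with return_time in Hlim by ring.
  apply (is_lim_seq_le_loc (fun _ => psum taboo_time L) _ _ _ (ex_intro _ L Hbound)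
           (is_lim_seq_const _) Hlim).
Qed.

(* [visits j] is the expected number of visits of the jump chain to j before returning to 1. *)
Definition visits j := Series (fun l => taboo l j).

Lemma visits_series j : is_series (fun l => taboo l j) (visits j).
Proof.
  apply Series_correct. destruct j as [|j].
  - exists 0. apply (is_series_finite (fun l => taboo l 0) 0). intros. apply taboo_at0.
  - assert (Hq : r <= jrate G (S j)) by (apply jrate_ge; lia).
    destruct (is_series_nonneg_bounded (fun l => taboo l (S j)) (jrate G (S j) * return_time))
      as [s [Hs _]]; [intros; apply taboo_nonneg| |exists s; exact Hs].
    intros L.
    replace (psum (fun l => taboo l (S j)) L)
      with (jrate G (S j) * psum (fun l => taboo l (S j) / jrate G (S j)) L)
      by (unfold Rdiv; rewrite psum_scal_r; field; lra).
    apply Rmult_le_compat_l; [lra|].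
    apply Rle_trans with (psum taboo_time L); [|apply psum_taboo_time_le].
    apply psum_le. intros l _.
    apply Rle_trans with (psum (fun i => taboo l i / jrate G i) (S (S j))).
    + apply (psum_term_le (fun i => taboo l i / jrate G i)); auto using taboo_div_nonneg.
    + apply psum_taboo_div_le.
Qed.

Lemma visits_nonneg j : 0 <= visits j.
Proof.
  apply (psum_le_series (fun l => taboo l j) _ 0); auto using taboo_nonneg, visits_series.
Qed.

Lemma visits_at0 : visits 0 = 0.
Proof. apply (Series_finite _ 0). intros. apply taboo_at0. Qed.

Lemma visits_at1 : visits 1 = 1.
Proof.
  unfold visits. rewrite (Series_finite _ 1); [simpl; lra|].
  intros [|k] Hk; [lia|]. apply taboo_S_at1.
Qed.

Definition occupation j := visits j / jrate G j.

Lemma occupation_nonneg j : 0 <= occupation j.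
Proof. apply Rmult_le_pos; auto using visits_nonneg, inv_jrate_nonneg. Qed.

Lemma psum_occupation_le J : psum occupation J <= return_time.
Proof.
  assert (Hs : is_series (fun l => psum (fun j => taboo l j / jrate G j) J) (psum occupation J)).
  { apply is_series_psum_comm. intros j. apply is_series_scal_r, visits_series. }
  apply is_series_psum in Hs.
  apply (is_lim_seq_le_R _ (fun _ => return_time) _ _ ) with (2 := Hs); auto using is_lim_seq_const.
  intros L. apply Rle_trans with (psum taboo_time L); [|apply psum_taboo_time_le].
  apply psum_le. intros. apply psum_taboo_div_le.
Qed.

Lemma visits_invariant k : (1 <= k)%nat ->
  is_series (fun j => visits j * jprob G j k) (visits k).
Proof.
  intros Hk.
  assert (Hu : forall l j, 0 <= taboo l j * jprob G j k)
    by (intros; apply Rmult_le_pos; auto using taboo_nonneg).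
  assert (HF : forall j, is_series (fun l => taboo l j * jprob G j k) (visits j * jprob G j k))
    by (intros; apply is_series_scal_r, visits_series).
  destruct (Nat.eqb_spec k 1) as [->|Hk1].
  - apply (is_series_swap_nonneg _ _ return_prob _ Hu HF).
    + intros l. apply is_series_finite. intros j Hj. rewrite taboo_support by lia. ring.
    + rewrite visits_at1. exact return_series.
  - apply (is_series_swap_nonneg _ _ (fun l => taboo (S l) k) _ Hu HF).
    + intros l. rewrite taboo_S_jprob by lia.
      apply is_series_finite. intros j Hj. rewrite taboo_support by lia. ring.
    + apply (is_series_shift (fun l => taboo l k)); [|apply visits_series].
      simpl. destruct (Nat.eqb_spec k 1); [lia|reflexivity].
Qed.

Lemma occupation_invariant k : (1 <= k)%nat ->
  is_series (fun n => occupation (S n) * G (S n) k) 0.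
Proof.
  intros Hk.
  assert (Hshift : is_series (fun n => visits (S n) * jprob G (S n) k) (visits k)).
  { apply (is_series_shift (fun j => visits j * jprob G j k)); [|apply visits_invariant, Hk].
    rewrite visits_at0. ring. }
  pose proof (is_series_minus_R _ _ _ _ Hshift (is_series_delta_S visits k Hk)) as H.
  rewrite Rminus_diag in H. revert H. apply is_series_ext. intros n. cbv beta.
  (* G_kk = -q_k, and q_j P_jk = G_jk off the diagonal *)
  match goal with |- ?x = ?y => change (@eq R x y) end.
  assert (Hq : 0 < jrate G (S n)) by (pose proof (jrate_ge (S n) ltac:(lia)); lra).
  unfold occupation. rewrite (jprob_pos_rate G (S n) k Hq).
  destruct (Nat.eqb_spec (S n) k) as [<-|].
  - unfold jrate in *. field. lra.
  - unfold Rdiv. field. lra.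
Qed.

Lemma ex_occupation_weighted_mass (x : nat -> R) : (forall k, (1 <= k)%nat -> 1 <= x k) ->
  exists Z, is_series (fun n => occupation (S n) / x (S n)) Z /\ 0 < Z.
Proof.
  intros Hx.
  assert (Hterm : forall n, 0 <= occupation (S n) / x (S n) <= occupation (S n)).
  { intros n. pose proof (Hx (S n) ltac:(lia)). pose proof (occupation_nonneg (S n)).
    split; [apply Rmult_le_pos; [lra|left; apply Rinv_0_lt_compat; lra]|].
    unfold Rdiv. rewrite <- (Rmult_1_r (occupation (S n))) at 2.
    apply Rmult_le_compat_l; [lra|]. rewrite <- Rinv_1. apply Rinv_le_contravar; lra. }
  destruct (is_series_nonneg_bounded (fun n => occupation (S n) / x (S n)) return_time)
    as [Z [HZ _]]; [apply Hterm| |].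
  { intros N. apply Rle_trans with (psum occupation (S N)); [|apply psum_occupation_le].
    rewrite psum_shift. pose proof (occupation_nonneg 0).
    enough (psum (fun n => occupation (S n) / x (S n)) N
            <= psum (fun n => occupation (S n)) N) by lra.
    apply psum_le. intros. apply Hterm. }
  exists Z. split; [exact HZ|].
  apply Rlt_le_trans with (psum (fun n => occupation (S n) / x (S n)) 1);
    [|apply psum_le_series; [apply Hterm|exact HZ]].
  simpl. unfold occupation. rewrite visits_at1.
  pose proof (jrate_ge 1 (le_n 1)). pose proof (Hx 1%nat (le_n 1)).
  rewrite Rplus_0_l. apply Rdiv_lt_0_compat; [apply Rdiv_lt_0_compat|]; lra.
Qed.

End Recurrent.

End TabooChain.

Ltac case_nat_tests :=
  repeat match goal with
         | |- context [Nat.eqb ?a ?b] => destruct (Nat.eqb_spec a b)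
         | |- context [Nat.ltb ?a ?b] => destruct (Nat.ltb_spec a b)
         end; cbn [orb]; try lia; try reflexivity.

Section QbarChain.

Variable p : R.
Hypothesis p_range : 0 < p <= 1.

Lemma Qbar_below j k : (1 <= k)%nat -> (k < j)%nat ->
  Qbar p j k = Binomial.C (j - 1) (k - 1) * p ^ k * (1 - p) ^ (j - k).
Proof. intros. unfold Qbar. case_nat_tests. Qed.

Lemma Qbar_up j : (1 <= j)%nat -> Qbar p j (S j) = INR (S j) * p.
Proof. intros. unfold Qbar. case_nat_tests. Qed.

Lemma Qbar_diag j : (1 <= j)%nat -> Qbar p j j = p ^ j - (2 + INR j) * p.
Proof. intros. unfold Qbar. case_nat_tests. Qed.

Lemma Qbar_far j k : (j + 2 <= k)%nat -> Qbar p j k = 0.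
Proof. intros. unfold Qbar. case_nat_tests. Qed.

Lemma Qbar_jrate j : (1 <= j)%nat -> jrate (Qbar p) j = (2 + INR j) * p - p ^ j.
Proof. intros. unfold jrate. rewrite Qbar_diag by assumption. ring. Qed.

Lemma Qbar_jrate_ge j : (1 <= j)%nat -> 2 * p <= jrate (Qbar p) j.
Proof.
  intros Hj. rewrite Qbar_jrate by exact Hj.
  assert (p ^ j <= p).
  { destruct j as [|j]; [lia|]. simpl.
    assert (p ^ j <= 1) by (rewrite <- (pow1 j); apply pow_incr; lra). nra. }
  assert (1 <= INR j) by (apply (le_INR 1); exact Hj). nra.
Qed.

Lemma Qbar_jrate_nonneg j : 0 <= jrate (Qbar p) j.
Proof.
  destruct j as [|j].
  - unfold jrate, Qbar. simpl. lra.
  - pose proof (Qbar_jrate_ge (S j) ltac:(lia)). lra.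
Qed.

Lemma Qbar_jprob j k : (1 <= j)%nat ->
  jprob (Qbar p) j k = if Nat.eqb j k then 0 else Qbar p j k / jrate (Qbar p) j.
Proof.
  intros Hj. apply jprob_pos_rate. pose proof (Qbar_jrate_ge j Hj). lra.
Qed.

Lemma Qbar_jprob_at0 k : jprob (Qbar p) 0 k = if Nat.eqb 0 k then 1 else 0.
Proof.
  unfold jprob. destruct (Req_EM_T (jrate (Qbar p) 0) 0) as [|Hq]; [reflexivity|].
  exfalso. apply Hq. unfold jrate, Qbar. simpl. ring.
Qed.

Lemma Qbar_offdiag_nonneg j k : j <> k -> 0 <= Qbar p j k.
Proof.
  intros Hjk. unfold Qbar. destruct (Nat.eqb j 0 || Nat.eqb k 0)%bool; [lra|].
  destruct (Nat.ltb_spec k j).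
  - apply Rmult_le_pos; [apply Rmult_le_pos|]; [|apply pow_le; lra..].
    unfold Binomial.C. apply Rmult_le_pos; [apply pos_INR|].
    left. apply Rinv_0_lt_compat, Rmult_lt_0_compat; apply INR_fact_lt_0.
  - destruct (Nat.eqb_spec k (S j)); [apply Rmult_le_pos; [apply pos_INR|lra]|].
    destruct (Nat.eqb_spec k j); [lia|lra].
Qed.

Lemma Qbar_jprob_nonneg j k : 0 <= jprob (Qbar p) j k.
Proof.
  destruct j as [|j].
  - rewrite Qbar_jprob_at0. destruct (Nat.eqb 0 k); lra.
  - rewrite Qbar_jprob by lia. destruct (Nat.eqb_spec (S j) k); [lra|].
    pose proof (Qbar_jrate_ge (S j) ltac:(lia)).
    apply Rmult_le_pos; [apply Qbar_offdiag_nonneg; exact n|].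
    left. apply Rinv_0_lt_compat. lra.
Qed.

Lemma Qbar_jprob_skipfree j k : (j + 2 <= k)%nat -> jprob (Qbar p) j k = 0.
Proof.
  intros Hk. destruct j as [|j].
  - rewrite Qbar_jprob_at0. destruct (Nat.eqb_spec 0 k); [lia|reflexivity].
  - rewrite Qbar_jprob, Qbar_far by lia. destruct (Nat.eqb (S j) k); unfold Rdiv; ring.
Qed.

Lemma Qbar_jprob_to0 j : (1 <= j)%nat -> jprob (Qbar p) j 0 = 0.
Proof.
  intros Hj. rewrite Qbar_jprob by exact Hj.
  unfold Qbar. rewrite Bool.orb_true_r. destruct (Nat.eqb j 0); unfold Rdiv; ring.
Qed.

(* Binomial theorem: the downward rates out of j add up to p (1 - p^(j-1)). *)
Lemma Qbar_offdiag_psum j : (1 <= j)%nat ->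
  psum (fun k => if Nat.eqb j k then 0 else Qbar p j k) (j + 2) = jrate (Qbar p) j.
Proof.
  intros Hj. destruct j as [|j]; [lia|].
  replace (S j + 2)%nat with (1 + S (S j))%nat by lia.
  rewrite psum_split. simpl. rewrite Nat.eqb_refl.
  destruct (Nat.eqb_spec j (S j)); [lia|].
  rewrite (psum_ext _ (fun i => p * (Binomial.C j i * p ^ i * (1 - p) ^ (j - i)))).
  2:{ intros i Hi. simpl. destruct (Nat.eqb_spec j i); [lia|].
      rewrite Qbar_below by lia. simpl. rewrite !Nat.sub_0_r. ring. }
  rewrite psum_scal_l, Qbar_up, Qbar_jrate, S_INR by lia.
  pose proof (binomial p (1 - p) j) as Hbin.
  rewrite <- sum_n_Reals, psum_sum_n in Hbin. simpl psum in Hbin.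
  replace (p + (1 - p)) with 1 in Hbin by ring.
  rewrite pow1, Nat.sub_diag in Hbin. unfold Binomial.C in Hbin at 2. rewrite Nat.sub_diag in Hbin.
  simpl in Hbin. field_simplify in Hbin; [|apply INR_fact_neq_0].
  unfold Qbar at 1. simpl. nra.
Qed.

Lemma Qbar_jprob_rowsum j : (1 <= j)%nat -> psum (jprob (Qbar p) j) (j + 2) = 1.
Proof.
  intros Hj. pose proof (Qbar_jrate_ge j Hj).
  rewrite (psum_ext _ (fun k => (if Nat.eqb j k then 0 else Qbar p j k) * / jrate (Qbar p) j))
    by (intros; rewrite Qbar_jprob by exact Hj; destruct (Nat.eqb j k); unfold Rdiv; ring).
  rewrite psum_scal_r, Qbar_offdiag_psum by exact Hj. field. lra.
Qed.

End QbarChain.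

Lemma binomial_absorption j k : (1 <= k)%nat -> (k <= j)%nat ->
  Binomial.C j k * INR k = Binomial.C (j - 1) (k - 1) * INR j.
Proof.
  intros Hk Hj. destruct j as [|j]; [lia|]. destruct k as [|k]; [lia|].
  rewrite !Nat.sub_succ, !Nat.sub_0_r. unfold Binomial.C.
  rewrite Nat.sub_succ, !fact_simpl, !mult_INR.
  pose proof (INR_fact_neq_0 j). pose proof (INR_fact_neq_0 k). pose proof (INR_fact_neq_0 (j - k)).
  assert (INR (S k) <> 0) by (apply not_0_INR; lia).
  field. auto.
Qed.

Lemma Qgen_dual p j k : (1 <= j)%nat -> (1 <= k)%nat ->
  Qgen p j k * INR k = Qbar p j k * INR j - (if Nat.eqb j k then (1 - 2 * p) * INR k else 0).
Proof.
  intros Hj Hk. unfold Qgen.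
  destruct (Nat.eqb_spec k (S j)) as [->|].
  - rewrite Qbar_up by exact Hj. destruct (Nat.eqb_spec j (S j)); [lia|]. ring.
  - destruct (Nat.ltb_spec k j).
    + rewrite Qbar_below by assumption. destruct (Nat.eqb_spec j k); [lia|].
      replace (Binomial.C j k * p ^ k * (1 - p) ^ (j - k) * INR k)
        with (Binomial.C j k * INR k * p ^ k * (1 - p) ^ (j - k)) by ring.
      rewrite binomial_absorption by lia. ring.
    + destruct (Nat.eqb_spec k j) as [->|].
      * rewrite Qbar_diag, Nat.eqb_refl by exact Hj. ring.
      * rewrite Qbar_far by lia. destruct (Nat.eqb_spec j k); [lia|]. ring.
Qed.

Lemma is_qsd_of_dual_invariant (Q D : nat -> nat -> R) (x mu : nat -> R) (c Z : R) :
  (forall k, (1 <= k)%nat -> 0 < x k) ->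
  (forall j k, (1 <= j)%nat -> (1 <= k)%nat ->
     Q j k * x k = D j k * x j - (if Nat.eqb j k then c * x k else 0)) ->
  (forall k, (1 <= k)%nat -> 0 <= mu k) ->
  (forall k, (1 <= k)%nat -> is_series (fun n => mu (S n) * D (S n) k) 0) ->
  is_series (fun n => mu (S n) / x (S n)) Z -> 0 < Z ->
  is_qsd Q (fun k => mu k / x k / Z) (- c).
Proof.
  intros Hx Hdual Hmu Hinv HZ HZpos. split; [|split].
  - intros k Hk. pose proof (Hx k Hk). pose proof (Hmu k Hk).
    apply Rdiv_le_0_compat; [apply Rdiv_le_0_compat|]; lra.
  - pose proof (is_series_scal_r (/ Z) _ _ HZ) as H. rewrite Rinv_r in H by lra. exact H.
  - intros k Hk. pose proof (Hx k Hk) as Hxk.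
    pose proof (is_series_minus_R _ _ _ _ (is_series_scal_r (/ (x k * Z)) _ _ (Hinv k Hk))
                  (is_series_delta_S (fun k => c * (mu k / x k / Z)) k Hk)) as H.
    replace (- c * (mu k / x k / Z)) with (0 * / (x k * Z) - c * (mu k / x k / Z)) by ring.
    revert H. apply is_series_ext. intros n. cbv beta.
    match goal with |- ?u = ?v => change (@eq R u v) end.
    pose proof (Hx (S n) ltac:(lia)).
    assert (HQ : Q (S n) k = (D (S n) k * x (S n) - (if Nat.eqb (S n) k then c * x k else 0)) / x k)
      by (rewrite <- Hdual by lia; field; lra).
    rewrite HQ. destruct (Nat.eqb_spec (S n) k) as [<-|]; field; lra.
Qed.

Theorem proposition4 (p : R) (hp0 : 0 < p) (hp1 : p <= 1) :
  pos_recurrent 1 (Qbar p) ->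
  exists a : nat -> R, is_qsd (Qgen p) a (- (1 - 2 * p)).
Proof.
  intros Hrec. assert (Hp : 0 < p <= 1) by lra.
  assert (H2p : 0 < 2 * p) by lra.
  pose proof (Qbar_jrate_nonneg p Hp) as Hrate_nonneg.
  pose proof (Qbar_jrate_ge p Hp) as Hrate_ge.
  pose proof (Qbar_jprob_nonneg p Hp) as Hjprob_nonneg.
  pose proof (Qbar_jprob_skipfree p Hp) as Hskipfree.
  pose proof (Qbar_jprob_to0 p Hp) as Hto0.
  pose proof (Qbar_jprob_rowsum p Hp) as Hrowsum.
  destruct (Hrec 1%nat (le_n 1)) as [Hhit Hex].
  assert (Hret : is_series (return_prob (Qbar p)) 1)
    by (revert Hhit; apply is_series_ext; intros; apply hitp_at1, Hskipfree).
  destruct (ex_occupation_weighted_mass (Qbar p) (2 * p)) with (x := INR) as [Z [HZ HZpos]];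
    auto.
  { intros k Hk. apply (le_INR 1), Hk. }
  exists (fun k => occupation (Qbar p) k / INR k / Z).
  apply (is_qsd_of_dual_invariant _ (Qbar p) INR _ _ Z); auto using Qgen_dual.
  - intros k Hk. apply lt_0_INR. lia.
  - intros. apply (occupation_nonneg (Qbar p) (2 * p)); auto.
  - intros. apply (occupation_invariant (Qbar p) (2 * p)); auto.
Qed.
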